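(* Let $\mathfrak n$ be a seven-dimensional nilpotent but non-abelian real Lie algebra with an invariant scalar product $\langle\cdot,\cdot\rangle$ of index three. Then $\mathrm{ad}(\mathfrak n)$ is not contained in $\mathfrak g_{2(2)}$, where $\mathfrak g_{2(2)}$ is regarded as a subalgebra of $\mathfrak{so}(\mathfrak n,\langle\cdot,\cdot\rangle)\cong\mathfrak{so}_{4,3}$ (i.e. there is no three-form on $\mathfrak n$ of $\mathrm G_{2(2)}$-type compatible with $\langle\cdot,\cdot\rangle$ that is annihilated by $\mathrm{ad}(x)$ for all $x\in\mathfrak n$).
   Context: An invariant scalar product is a nondegenerate symmetric bilinear form satisfying $\langle[x,y],z\rangle=\langle x,[y,z]\rangle$; index three on a seven-dimensional space means signature $(4,3)$ or $(3,4)$. $\mathfrak{so}(\mathfrak n,\langle\cdot,\cdot\rangle)$ is the Lie algebra of endomorphisms skew-symmetric for $\langle\cdot,\cdot\rangle$. $\mathfrak g_{2(2)}$ is the Lie algebra of the split real form $\mathrm G_{2(2)}$ of $\mathrm G_2^{\mathbb C}$, which is the stabilizer subalgebra in $\mathfrak{so}_{4,3}$ of a certain (generic, split-type) three-form. *)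

From HB Require Import structures.
From mathcomp Require Import all_boot all_order all_algebra.
From mathcomp Require Import reals.
Set Implicit Arguments. Unset Strict Implicit. Unset Printing Implicit Defensive.
Import Order.TTheory GRing.Theory Num.Theory.
Local Open Scope ring_scope.

Definition is_lie_bracket (R : realType) (V : vectType R) (br : V -> V -> V) : Prop :=
  (forall (a : R) x y z, br (a *: x + y) z = a *: br x z + br y z) /\
  (forall (a : R) x y z, br z (a *: x + y) = a *: br z x + br z y) /\
  (forall x, br x x = 0) /\
  (forall x y z, br x (br y z) + br y (br z x) + br z (br x y) = 0).

(* Nilpotent: the lower central series vanishes, i.e. for some n all
   n+1-fold nested brackets [x_1,[x_2,...[x_n,x]...]] vanish. *)
Definition lie_nilpotent (R : realType) (V : vectType R) (br : V -> V -> V) : Prop :=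
  exists n : nat, forall (xs : n.-tuple V) (x : V), foldr br x xs = 0.

Definition lie_nonabelian (R : realType) (V : vectType R) (br : V -> V -> V) : Prop :=
  exists x y, br x y != 0.

Definition is_invariant_scalar_product (R : realType) (V : vectType R)
  (br : V -> V -> V) (sp : V -> V -> R) : Prop :=
  (forall (a : R) x y z, sp (a *: x + y) z = a * sp x z + sp y z) /\
  (forall x y, sp x y = sp y x) /\
  (forall x, (forall y, sp x y = 0) -> x = 0) /\
  (forall x y z, sp (br x y) z = sp x (br y z)).

(* Index three on a 7-dimensional space: signature (4,3) or (3,4), i.e. there
   is an orthonormal basis with exactly 3 (or exactly 4) vectors of norm -1. *)
Definition has_index_three (R : realType) (V : vectType R) (sp : V -> V -> R) : Prop :=
  exists e : 7.-tuple V,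
    basis_of fullv e /\
    (forall i j : 'I_7, i != j -> sp (tnth e i) (tnth e j) = 0) /\
    (forall i : 'I_7, sp (tnth e i) (tnth e i) = 1 \/ sp (tnth e i) (tnth e i) = -1) /\
    (#|[set i : 'I_7 | sp (tnth e i) (tnth e i) == -1]| = 3%N \/
     #|[set i : 'I_7 | sp (tnth e i) (tnth e i) == -1]| = 4%N).

Definition trilinear (R : realType) (V : vectType R) (phi : V -> V -> V -> R) : Prop :=
  (forall (a : R) x y u v, phi (a *: x + y) u v = a * phi x u v + phi y u v) /\
  (forall (a : R) x y u v, phi u (a *: x + y) v = a * phi u x v + phi u y v) /\
  (forall (a : R) x y u v, phi u v (a *: x + y) = a * phi u v x + phi u v y).

Definition eps3 (R : realType) (a b c i j k : nat) : R :=
  ((((i == a) && (j == b) && (k == c)) : nat) + (((i == b) && (j == c) && (k == a)) : nat)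
     + (((i == c) && (j == a) && (k == b)) : nat))%:R
  - ((((i == b) && (j == a) && (k == c)) : nat) + (((i == a) && (j == c) && (k == b)) : nat)
     + (((i == c) && (j == b) && (k == a)) : nat))%:R.

(* Standard split (G_2(2)-type) three-form on R^7 (0-indexed basis):
   phi0 = e012 - e034 - e056 - e135 + e146 + e236 + e245
   (obtained from Bryant's compact form by e_k -> i e_k, k = 3..6). *)
Definition phi0 (R : realType) (i j k : 'I_7) : R :=
  eps3 R 0 1 2 i j k - eps3 R 0 3 4 i j k - eps3 R 0 5 6 i j k
  - eps3 R 1 3 5 i j k + eps3 R 1 4 6 i j k + eps3 R 2 3 6 i j k + eps3 R 2 4 5 i j k.

(* The metric induced by phi0: diag(1,1,1,-1,-1,-1,-1). *)
Definition g0 (R : realType) (i j : 'I_7) : R :=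
  if i == j then (if (i < 3)%N then 1 else -1) else 0.

(* phi is a three-form of G_2(2)-type compatible with sp: in some basis phi is
   the standard split form phi0 and sp is a nonzero multiple of the metric
   g0 induced by phi0 (so the stabilizer g_2(2) of phi lies in so(V,sp)). *)
Definition g22_compatible (R : realType) (V : vectType R)
  (sp : V -> V -> R) (phi : V -> V -> V -> R) : Prop :=
  exists (f : 7.-tuple V) (c : R),
    basis_of fullv f /\ c != 0 /\
    (forall i j k : 'I_7, phi (tnth f i) (tnth f j) (tnth f k) = phi0 R i j k) /\
    (forall i j : 'I_7, sp (tnth f i) (tnth f j) = c * g0 R i j).

Definition ad_annihilates (R : realType) (V : vectType R)
  (br : V -> V -> V) (phi : V -> V -> V -> R) : Prop :=
  forall x a b c, phi (br x a) b c + phi a (br x b) c + phi a b (br x c) = 0.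

From mathcomp Require Import all_boot all_order all_algebra.
From mathcomp Require Import reals ring lra zify.
Import GRing.Theory Num.Theory.
Set Implicit Arguments. Unset Strict Implicit. Unset Printing Implicit Defensive.
Local Open Scope ring_scope.

(* Invariance makes Q(x, y, z) = <[x, y], z> an alternating 3-form.  In a basis
   in which phi and <.,.> are the standard split forms, ad(e_i) annihilating phi
   says that for every i the endomorphism with matrix (g_m Q(e_i, e_j, e_m))_jm
   lies in g_2(2).  Thirty-five of these linear conditions already form a
   nonsingular system in the 35 components of Q, so Q = 0, and nondegeneracy
   gives [x, y] = 0. *)

Section LinearFunctions.
Variables (K : pzRingType) (U W : lmodType K) (h : U -> W).
Hypothesis h_linear : linear h.

Lemma linear_funD x y : h (x + y) = h x + h y.
Proof. by have := h_linear 1 x y; rewrite !scale1r. Qed.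

Lemma linear_fun0 : h 0 = 0.
Proof. by apply: (addIr (h 0)); rewrite -linear_funD !add0r. Qed.

Lemma linear_funN x : h (- x) = - h x.
Proof. by have := h_linear (-1) x 0; rewrite !addr0 !scaleN1r linear_fun0 addr0. Qed.

Lemma linear_fun_sum n (a : 'I_n -> K) (v : 'I_n -> U) :
  h (\sum_i a i *: v i) = \sum_i a i *: h (v i).
Proof.
elim/big_rec2: _ => [|i _ w _ <-]; first exact: linear_fun0.
by rewrite h_linear.
Qed.

End LinearFunctions.

Lemma linear_fun_eq0_on_basis (K : fieldType) (V : vectType K) (W : lmodType K)
    (h : V -> W) n (f : n.-tuple V) :
  linear h -> basis_of fullv f -> (forall i : 'I_n, h f`_i = 0) -> forall x, h x = 0.
Proof.
move=> h_linear f_basis h_f x.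
rewrite (coord_basis f_basis (memvf x)) (linear_fun_sum h_linear).
by rewrite big1 // => i _; rewrite h_f scaler0.
Qed.

Definition skew3 (M : zmodType) (q : nat -> nat -> nat -> M) (i j k : nat) : M :=
  if (i < j < k)%N then q i j k
  else if (j < k < i)%N then q j k i
  else if (k < i < j)%N then q k i j
  else if (j < i < k)%N then - q j i k
  else if (i < k < j)%N then - q i k j
  else if (k < j < i)%N then - q k j i
  else 0.

Lemma skew3_eq0 (M : zmodType) (q : nat -> nat -> nat -> M) n :
    (forall a b c, (a < b)%N -> (b < c)%N -> (c < n)%N -> q a b c = 0) ->
  forall i j k, (i < n)%N -> (j < n)%N -> (k < n)%N -> skew3 q i j k = 0.
Proof.
move=> q0 i j k ? ? ?; rewrite /skew3.
by do 6?[case: ifP => [/andP[? ?]|_]; first by rewrite q0 ?oppr0].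
Qed.

Lemma alternating_skew3 (R : numDomainType) (Q : nat -> nat -> nat -> R) :
    (forall i j k, Q i j k = - Q j i k) -> (forall i j k, Q i j k = Q j k i) ->
  forall i j k, Q i j k = skew3 Q i j k.
Proof.
move=> QN QC.
have Q_diag i k : Q i i k = 0.
  by have := mulrn_eq0 (Q i i k) 2; rewrite mulr2n {1}QN addNr eqxx => /esym /eqP.
move=> i j k; rewrite /skew3.
case: ifP => // ?.
case: ifP => [_|?]; first by rewrite QC.
case: ifP => [_|?]; first by rewrite QC QC.
case: ifP => [_|?]; first by rewrite QN.
case: ifP => [_|?]; first by rewrite [Q i k j]QC [Q k j i]QN opprK QC.
case: ifP => [_|?]; first by rewrite [Q k j i]QN opprK QC.
have [->|?] := eqVneq i j; first exact: Q_diag.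
have [->|?] := eqVneq j k; first by rewrite QC Q_diag.
have [->|?] := eqVneq i k; first by rewrite QC QC Q_diag.
lia.
Qed.

(* The action, as a derivation, on the trilinear form T of the endomorphism
   e_j |-> \sum_m A j m e_m. *)
Definition act3 (R : pzRingType) (n : nat) (A : 'I_n -> 'I_n -> R)
    (T : 'I_n -> 'I_n -> 'I_n -> R) (j k l : 'I_n) : R :=
  \sum_m (A j m * T m k l + A k m * T j m l + A l m * T j k m).

Lemma eq_act3 (R : pzRingType) n (A A' : 'I_n -> 'I_n -> R) T :
  (forall j m, A j m = A' j m) -> forall j k l, act3 A T j k l = act3 A' T j k l.
Proof. by move=> eqA j k l; apply: eq_bigr => m _; rewrite !eqA. Qed.

Section SplitG2Annihilator.
Variables (R : realType) (q : nat -> nat -> nat -> R).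
Hypothesis q_ann : forall i j k l : 'I_7,
  act3 (fun j m => g0 R m m * skew3 q i j m) (phi0 R) j k l = 0.

Local Notation ord7 n := (@Ordinal 7 n isT).

(* Proves [lhs = rhs] from the instance (i, j, k, l) of [q_ann], whose
   expansion must be exactly lhs - rhs; the equations below are stated with
   that sign convention. *)
Ltac ann_instance ijkl :=
  lazymatch ijkl with (?i, ?j, ?k, ?l) =>
    apply/eqP; rewrite -subr_eq0; apply/eqP;
    apply: (eq_trans _ (q_ann (ord7 i) (ord7 j) (ord7 k) (ord7 l)));
    rewrite /act3 !big_ord_recr big_ord0 /= /g0 /phi0 /eps3 /skew3 /=; ring
  end.

(* The 35 instances used decouple into the eight small systems below. *)
Lemma ann_block013 : [/\ q 0 1 3 = 0, q 0 2 4 = 0, q 1 2 5 = 0 & q 3 4 5 = 0].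
Proof.
have e1 : q 0 1 3 = q 0 2 4 by ann_instance (0, 0, 1, 4)%N.
have e2 : q 0 1 3 = q 1 2 5 by ann_instance (1, 0, 1, 5)%N.
have e3 : - q 0 2 4 = q 1 2 5 by ann_instance (2, 0, 1, 6)%N.
have e4 : - q 0 1 3 = q 3 4 5 by ann_instance (3, 0, 3, 5)%N.
by split; lra.
Qed.

Lemma ann_block014 : [/\ q 0 1 4 = 0, q 0 2 3 = 0, q 1 2 6 = 0 & q 3 4 6 = 0].
Proof.
have e1 : - q 0 1 4 = q 0 2 3 by ann_instance (0, 0, 1, 3)%N.
have e2 : - q 0 1 4 = q 1 2 6 by ann_instance (1, 0, 1, 6)%N.
have e3 : q 0 2 3 = - q 1 2 6 by ann_instance (2, 0, 1, 5)%N.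
have e4 : q 0 2 3 = q 3 4 6 by ann_instance (3, 0, 3, 6)%N.
by split; lra.
Qed.

Lemma ann_block015 : [/\ q 0 1 5 = 0, q 0 2 6 = 0, q 1 2 3 = 0 & q 3 5 6 = 0].
Proof.
have e1 : q 0 1 5 = q 0 2 6 by ann_instance (0, 0, 1, 6)%N.
have e2 : - q 0 1 5 = q 1 2 3 by ann_instance (1, 0, 1, 3)%N.
have e3 : q 0 2 6 = q 1 2 3 by ann_instance (2, 0, 1, 4)%N.
have e4 : q 1 2 3 = q 3 5 6 by ann_instance (3, 1, 3, 6)%N.
by split; lra.
Qed.

Lemma ann_block016 : [/\ q 0 1 6 = 0, q 0 2 5 = 0, q 1 2 4 = 0 & q 4 5 6 = 0].
Proof.
have e1 : - q 0 1 6 = q 0 2 5 by ann_instance (0, 0, 1, 5)%N.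
have e2 : q 0 1 6 = q 1 2 4 by ann_instance (1, 0, 1, 4)%N.
have e3 : q 1 2 4 = q 0 2 5 by ann_instance (2, 0, 1, 3)%N.
have e4 : q 1 2 4 = q 4 5 6 by ann_instance (4, 1, 3, 6)%N.
by split; lra.
Qed.

Lemma ann_block035 : [/\ q 0 3 5 = 0, q 0 4 6 = 0, q 1 3 4 = 0 & q 1 5 6 = 0].
Proof.
have e1 : q 0 3 5 = q 0 4 6 by ann_instance (0, 0, 3, 6)%N.
have e2 : q 1 3 4 = q 0 3 5 by ann_instance (3, 0, 1, 3)%N.
have e3 : q 0 4 6 = - q 1 3 4 by ann_instance (4, 0, 1, 4)%N.
have e4 : - q 1 3 4 = q 1 5 6 by ann_instance (1, 1, 3, 6)%N.
by split; lra.
Qed.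

Lemma ann_block036 : [/\ q 0 3 6 = 0, q 0 4 5 = 0, q 2 3 4 = 0 & q 2 5 6 = 0].
Proof.
have e1 : - q 0 3 6 = q 0 4 5 by ann_instance (0, 0, 3, 5)%N.
have e2 : q 0 3 6 = - q 2 3 4 by ann_instance (3, 0, 1, 4)%N.
have e3 : - q 0 4 5 = q 2 3 4 by ann_instance (4, 0, 1, 3)%N.
have e4 : - q 2 3 4 = q 2 5 6 by ann_instance (2, 1, 3, 6)%N.
by split; lra.
Qed.

Lemma ann_block136 : [/\ q 1 3 6 = 0, q 1 4 5 = 0, q 2 3 5 = 0 & q 2 4 6 = 0].
Proof.
have e1 : - q 1 3 6 = q 1 4 5 by ann_instance (1, 0, 3, 5)%N.
have e2 : q 1 3 6 = - q 2 3 5 by ann_instance (3, 0, 1, 5)%N.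
have e3 : - q 1 4 5 = q 2 3 5 by ann_instance (5, 0, 1, 3)%N.
have e4 : q 2 3 5 = q 2 4 6 by ann_instance (2, 0, 3, 6)%N.
by split; lra.
Qed.

Lemma ann_phi0_lines :
  [/\ q 0 1 2 = 0, q 0 3 4 = 0, q 0 5 6 = 0, q 1 3 5 = 0
    & [/\ q 1 4 6 = 0, q 2 3 6 = 0 & q 2 4 5 = 0]].
Proof.
have e1 : q 0 1 2 = q 0 3 4 + q 0 5 6 by ann_instance (0, 1, 3, 6)%N.
have e2 : q 1 3 5 = q 0 1 2 + q 1 4 6 by ann_instance (1, 0, 3, 6)%N.
have e3 : - q 0 1 2 = q 2 3 6 + q 2 4 5 by ann_instance (2, 0, 3, 5)%N.
have e4 : q 2 3 6 = q 0 3 4 + q 1 3 5 by ann_instance (3, 0, 1, 6)%N.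
have e5 : q 1 4 6 = q 0 3 4 - q 2 4 5 by ann_instance (4, 0, 1, 5)%N.
have e6 : q 0 5 6 = q 2 4 5 - q 1 3 5 by ann_instance (5, 0, 1, 4)%N.
have e7 : q 0 5 6 = q 1 4 6 + q 2 3 6 by ann_instance (6, 0, 1, 3)%N.
by split; [lra..|split; lra].
Qed.

Lemma skew3_annihilated_eq0 a b c :
  (a < b)%N -> (b < c)%N -> (c < 7)%N -> q a b c = 0.
Proof.
have [? ? ? ?] := ann_block013; have [? ? ? ?] := ann_block014.
have [? ? ? ?] := ann_block015; have [? ? ? ?] := ann_block016.
have [? ? ? ?] := ann_block035; have [? ? ? ?] := ann_block036.
have [? ? ? ?] := ann_block136; have [? ? ? ? [? ? ?]] := ann_phi0_lines.
by do 7?[case: c => [|c]]; do 7?[case: b => [|b]]; do 7?[case: a => [|a]] => //; lia.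
Qed.

End SplitG2Annihilator.

Section StructureConstants.
Variables (R : realType) (V : vectType R) (br : V -> V -> V) (sp : V -> V -> R).
Variables (phi : V -> V -> V -> R) (f : 7.-tuple V) (c : R).
Hypotheses (br_lie : is_lie_bracket br) (sp_inv : is_invariant_scalar_product br sp).
Hypotheses (phi_tri : trilinear phi) (f_basis : basis_of fullv f).
Hypothesis f_phi : forall i j k : 'I_7, phi (tnth f i) (tnth f j) (tnth f k) = phi0 R i j k.
Hypothesis f_sp : forall i j : 'I_7, sp (tnth f i) (tnth f j) = c * g0 R i j.
Hypothesis ad_phi : ad_annihilates br phi.

Definition struct_const (i j k : nat) : R := sp (br f`_i f`_j) f`_k.

Local Notation Q := struct_const.

Lemma sp_linear_l z : linear (fun x => sp x z : R^o).
Proof. by case: sp_inv => spL _ a x y; rewrite spL. Qed.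

Lemma sp_linear_r z : linear (sp z : V -> R^o).
Proof. by case: sp_inv => spL [spC _] a x y; rewrite !(spC z) spL. Qed.

Lemma br_linear_l y : linear (br^~ y).
Proof. by case: br_lie => brL _ a x z; rewrite brL. Qed.

Lemma br_linear_r x : linear (br x).
Proof. by case: br_lie => _ [brR _] a y z; rewrite brR. Qed.

Lemma g0_sqr (m : 'I_7) : g0 R m m * g0 R m m = 1.
Proof. by rewrite /g0 eqxx; case: ifP; rewrite ?mulr1 ?mulrNN ?mulr1. Qed.

Lemma sp_basis_coord w (m : 'I_7) : sp w f`_m = coord f m w * (c * g0 R m m).
Proof.
rewrite {1}(coord_basis f_basis (memvf w)) (linear_fun_sum (sp_linear_l _)).
rewrite (bigD1 m) //= -!(tnth_nth 0) f_sp big1 ?addr0 // => i ne_im.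
by rewrite -!(tnth_nth 0) f_sp /g0 (negbTE ne_im) mulr0 scaler0.
Qed.

Lemma scaled_expansion (h : V -> R) : linear (h : V -> R^o) ->
  forall w, c * h w = \sum_(m < 7) g0 R m m * sp w f`_m * h f`_m.
Proof.
move=> h_linear w; rewrite {1}(coord_basis f_basis (memvf w)) (linear_fun_sum h_linear).
rewrite mulr_sumr; apply: eq_bigr => m _; rewrite sp_basis_coord.
have := g0_sqr m; move: (g0 R m m) => g g_sqr.
by rewrite -[LHS]mulr1 -g_sqr /GRing.scale /=; ring.
Qed.

Lemma struct_constN i j k : Q i j k = - Q j i k.
Proof.
have br_anti x y : br x y = - br y x.
  case: br_lie => _ [_ [brA _]]; apply/eqP; rewrite -addr_eq0; apply/eqP.
  have := brA (x + y); rewrite (linear_funD (br_linear_l _)).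
  by rewrite !(linear_funD (br_linear_r _)) !brA add0r addr0.
by rewrite /struct_const br_anti (linear_funN (sp_linear_l _)).
Qed.

Lemma struct_constC i j k : Q i j k = Q j k i.
Proof. by case: sp_inv => _ [spC [_ spI]]; rewrite /struct_const spI spC. Qed.

Lemma struct_const_ad_phi0 (i j k l : 'I_7) :
  act3 (fun j m => g0 R m m * Q i j m) (phi0 R) j k l = 0.
Proof.
case: phi_tri => phiL [phiM phiR].
have := congr1 (fun t => c * t) (ad_phi f`_i f`_j f`_k f`_l).
rewrite /= mulr0 !mulrDr => <-; rewrite /act3 !big_split /=.
have phi_f (a b d : 'I_7) : phi f`_a f`_b f`_d = phi0 R a b d by rewrite -!tnth_nth.
congr (_ + _ + _).
- rewrite (@scaled_expansion (fun w => phi w f`_k f`_l)); last by move=> ? ? ?; apply: phiL.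
  by apply: eq_bigr => m _; rewrite phi_f.
- rewrite (@scaled_expansion (fun w => phi f`_j w f`_l)); last by move=> ? ? ?; apply: phiM.
  by apply: eq_bigr => m _; rewrite phi_f.
- rewrite (@scaled_expansion (fun w => phi f`_j f`_k w)); last by move=> ? ? ?; apply: phiR.
  by apply: eq_bigr => m _; rewrite phi_f.
Qed.

Lemma struct_const_eq0 (i j k : 'I_7) : Q i j k = 0.
Proof.
have Q_skew := alternating_skew3 struct_constN struct_constC.
have skew_ann (i' j' k' l' : 'I_7) :
    act3 (fun j m => g0 R m m * skew3 Q i' j m) (phi0 R) j' k' l' = 0.
  by rewrite -(struct_const_ad_phi0 i' j' k' l'); apply: eq_act3 => ? ?; rewrite -Q_skew.
rewrite Q_skew; apply: skew3_eq0 (ltn_ord i) (ltn_ord j) (ltn_ord k) => a b d.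
exact: skew3_annihilated_eq0.
Qed.

Lemma bracket_eq0 x y : br x y = 0.
Proof.
have br_f (i j : 'I_7) : br f`_i f`_j = 0.
  case: sp_inv => _ [_ [sp_nondeg _]]; apply: sp_nondeg.
  by apply: (linear_fun_eq0_on_basis (sp_linear_r _) f_basis) => k; apply: struct_const_eq0.
apply: (linear_fun_eq0_on_basis (br_linear_l y) f_basis) => i.
by apply: (linear_fun_eq0_on_basis (br_linear_r _) f_basis) => j; apply: br_f.
Qed.

End StructureConstants.

Theorem lemma3p9 (R : realType) (V : vectType R)
  (br : V -> V -> V) (sp : V -> V -> R) :
  \dim (fullv : {vspace V}) = 7%N ->
  is_lie_bracket br ->
  lie_nilpotent br ->
  lie_nonabelian br ->
  is_invariant_scalar_product br sp ->
  has_index_three sp ->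
  ~ (exists phi : V -> V -> V -> R,
       trilinear phi /\ g22_compatible sp phi /\ ad_annihilates br phi).
Proof.
move=> _ br_lie _ [x [y /eqP xy_neq0]] sp_inv _.
case=> phi [phi_tri [[f [c [f_basis [_ [f_phi f_sp]]]]] ad_phi]]; apply: xy_neq0.
exact: bracket_eq0 br_lie sp_inv phi_tri f_basis f_phi f_sp ad_phi x y.
Qed.
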